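(* Let $m\ge1$ and let $(t_{i,j})$ be positive reals with $t_{i+m,j-m}=t_{i,j}$, $t_{i+2,j+2}=t_{i,j}$. Define, for $i\in\mathbb{Z}$ ($m$-periodic sequences) $$a_i=t_{i+1,-i},\quad b_i=t_{i+2,-i+1},\quad c_i=t_{i,-i},\quad d_i=t_{i+1,-i+1},$$ $$x_i=\frac{c_id_{i+1}+c_{i+1}d_i}{a_ib_i},\qquad y_i=\frac{a_{i-1}b_i+a_ib_{i-1}}{c_id_i},$$ for $n\ge1$ $$u_{n,i}=\prod_{\ell=0}^{n-1}x_{i-\ell-1}^{\frac{n+1}{2}-\left|\frac{n-1}{2}-\ell\right|},\qquad v_{n,i}=\prod_{\ell=0}^{n-1}y_{i-\ell-1}^{\frac{n+1}{2}-\left|\frac{n-1}{2}-\ell\right|},$$ with $u_{0,i}=u_{-1,i}=u_{-2,i}=v_{0,i}=v_{-1,i}=v_{-2,i}=1$, and $\theta_{i,j,k}=t_{i+\lfloor k/2\rfloor,\,j+\lfloor k/2\rfloor}$. Then the solution of the $T$-system with initial data $T_{i,j,(i+j+1\bmod2)}=t_{i,j}$ is $$T_{i,j,k}=u_{k-1,\frac{i-j+k-1}{2}}\;v_{k-2,\frac{i-j+k-1}{2}}\;\theta_{i,j,k}\qquad(i,j\in\mathbb{Z},\ k\ge0,\ i+j+k\equiv1\pmod2).$$ Moreover, for $k\ge1$ and $i+j+k\equiv0\pmod2$, the ratio $L_{i,j,k}=\frac{T_{i+1,j,k}T_{i-1,j,k}}{T_{i,j,k+1}T_{i,j,k-1}}$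 is given by: if $k$ is even, with $\alpha=\frac{i-j}{2}$: $L_{i,j,k}=\frac{a_\alpha b_{\alpha-1}}{a_\alpha b_{\alpha-1}+a_{\alpha-1}b_\alpha}$ when $i+j+k\equiv0\pmod4$ and $L_{i,j,k}=\frac{a_{\alpha-1}b_{\alpha}}{a_\alpha b_{\alpha-1}+a_{\alpha-1}b_\alpha}$ when $i+j+k\equiv2\pmod4$; if $k$ is odd, with $\beta=\frac{i-j-1}{2}$: $L_{i,j,k}=\frac{c_{\beta+1}d_\beta}{c_\beta d_{\beta+1}+c_{\beta+1}d_\beta}$ when $i+j+k\equiv0\pmod4$ and $L_{i,j,k}=\frac{c_\beta d_{\beta+1}}{c_\beta d_{\beta+1}+c_{\beta+1}d_\beta}$ when $i+j+k\equiv2\pmod4$; and $R_{i,j,k}=\frac{T_{i,j+1,k}T_{i,j-1,k}}{T_{i,j,k+1}T_{i,j,k-1}}=1-L_{i,j,k}$.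
   Context: The $T$-system is $T_{i,j,k+1}T_{i,j,k-1}=T_{i+1,j,k}T_{i-1,j,k}+T_{i,j+1,k}T_{i,j-1,k}$ for $k\ge1$, $i+j+k\equiv0\pmod2$, on points $(i,j,k)\in\mathbb{Z}^2\times\mathbb{Z}_{\ge0}$ with $i+j+k\equiv1\pmod2$, with initial data $T_{i,j,(i+j+1\bmod 2)}=t_{i,j}$. The exponents in $u_{n,i},v_{n,i}$ are nonnegative integers. *)

From Stdlib Require Import Reals ZArith Lia Lra.
Open Scope R_scope.

Fixpoint prod_upto (f : nat -> R) (N : nat) : R :=
  match N with
  | O => 1
  | S N' => prod_upto f N' * f N'
  end.

Section Seqs.
Variable t : Z -> Z -> R.

Definition aa (i : Z) : R := t (i + 1)%Z (- i)%Z.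
Definition bb (i : Z) : R := t (i + 2)%Z (- i + 1)%Z.
Definition cc (i : Z) : R := t i (- i)%Z.
Definition dd (i : Z) : R := t (i + 1)%Z (- i + 1)%Z.

Definition xx (i : Z) : R :=
  (cc i * dd (i + 1)%Z + cc (i + 1)%Z * dd i) / (aa i * bb i).
Definition yy (i : Z) : R :=
  (aa (i - 1)%Z * bb i + aa i * bb (i - 1)%Z) / (cc i * dd i).

(* exponent (n+1)/2 - |(n-1)/2 - l|, written as ((n+1) - |n-1-2l|)/2,
   which is an exact nonnegative integer for 0 <= l <= n-1 *)
Definition expo (n l : Z) : nat :=
  Z.to_nat (((n + 1) - Z.abs (n - 1 - 2 * l)) / 2)%Z.

(* u_{n,i} for n >= 1; u_{n,i} = 1 for n <= 0 (used for n = 0,-1,-2) *)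
Definition uu (n i : Z) : R :=
  if (n <=? 0)%Z then 1 else
  prod_upto (fun l : nat =>
    xx (i - Z.of_nat l - 1)%Z ^ expo n (Z.of_nat l)) (Z.to_nat n).

Definition vv (n i : Z) : R :=
  if (n <=? 0)%Z then 1 else
  prod_upto (fun l : nat =>
    yy (i - Z.of_nat l - 1)%Z ^ expo n (Z.of_nat l)) (Z.to_nat n).

Definition theta (i j k : Z) : R := t (i + k / 2)%Z (j + k / 2)%Z.
End Seqs.

Definition is_T_solution (t : Z -> Z -> R) (T : Z -> Z -> Z -> R) : Prop :=
  (forall i j : Z, T i j ((i + j + 1) mod 2)%Z = t i j) /\
  (forall i j k : Z, (1 <= k)%Z -> Z.even (i + j + k) = true ->
     T i j (k + 1)%Z * T i j (k - 1)%Z =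
     T (i + 1)%Z j k * T (i - 1)%Z j k + T i (j + 1)%Z k * T i (j - 1)%Z k).

Definition Lratio (T : Z -> Z -> Z -> R) (i j k : Z) : R :=
  (T (i + 1)%Z j k * T (i - 1)%Z j k) / (T i j (k + 1)%Z * T i j (k - 1)%Z).
Definition Rratio (T : Z -> Z -> Z -> R) (i j k : Z) : R :=
  (T i (j + 1)%Z k * T i (j - 1)%Z k) / (T i j (k + 1)%Z * T i j (k - 1)%Z).

From Stdlib Require Import Reals ZArith Lia Lra.
Open Scope R_scope.

(* Write F(i,j,k) = prefactor k e * theta(i,j,k), with e = (i-j+k-1)/2 and
   prefactor k e = u_{k-1,e} v_{k-2,e}, for the candidate solution.  Around a point (i,j,k) with k >= 1 and i+j+k even,
   put E = (i-j+k)/2 and (p,r) = (i + k/2, j + k/2); the six neighbouring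
   values of F then split as
     F(i+1,j,k) F(i-1,j,k) = G * H(p,r),   F(i,j+1,k) F(i,j-1,k) = G * V(p,r),
     F(i,j,k+1) F(i,j,k-1) = G * (H(p,r) + V(p,r)),
   where G = prefactor k E * prefactor k (E-1), H(p,r) = t(p+1,r) t(p-1,r) and
   V(p,r) = t(p,r+1) t(p,r-1).  The last identity combines
   - a "discrete wave" identity for the tent-shaped products u, v, which
     produces one extra factor y_al (k even) or x_be (k odd), and
   - a local identity for t: by diagonal 2-periodicity the corners of the
     square around (p,r) are a_., b_., c_., d_. values, and y_al resp. x_be
     times the diagonal corners equals H + V.
   Hence F solves the T-system; F > 0, so by induction on k it is the unique
   solution, and L = H/(H+V), R = V/(H+V) = 1 - L, where H and V are read off
   from the corner values according to (i+j+k) mod 4. *)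

Ltac zlia := Z.to_euclidean_division_equations; lia.

Lemma odd_mod2 (a : Z) : Z.odd a = true <-> (a mod 2 = 1)%Z.
Proof. rewrite Zodd_mod; apply Z.eqb_eq. Qed.

Lemma even_mod2 (a : Z) : Z.even a = true <-> (a mod 2 = 0)%Z.
Proof. rewrite Zeven_mod; apply Z.eqb_eq. Qed.

Lemma prod_upto_ext (f g : nat -> R) (N : nat) :
  (forall l, (l < N)%nat -> f l = g l) -> prod_upto f N = prod_upto g N.
Proof.
  induction N as [|N IH]; intros Hfg; simpl; [reflexivity|].
  rewrite IH, Hfg by (intros; try apply Hfg; lia); reflexivity.
Qed.

Lemma prod_upto_mul (f g : nat -> R) (N : nat) :
  prod_upto (fun l => f l * g l) N = prod_upto f N * prod_upto g N.
Proof. induction N as [|N IH]; simpl; [ring | rewrite IH; ring]. Qed.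

Lemma prod_upto_first (f : nat -> R) (N : nat) :
  prod_upto f (S N) = f 0%nat * prod_upto (fun l => f (S l)) N.
Proof.
  induction N as [|N IH]; [simpl; ring|].
  change (prod_upto f (S (S N))) with (prod_upto f (S N) * f (S N)).
  rewrite IH; simpl; ring.
Qed.

Lemma prod_upto_pos (f : nat -> R) (N : nat) :
  (forall l, 0 < f l) -> 0 < prod_upto f N.
Proof.
  intros Hf; induction N as [|N IH]; simpl; [lra | apply Rmult_lt_0_compat; auto].
Qed.

(* Tent products: u and v are the tent products of the sequences x and y.
   tent_prod z n i = prod_{l<n} z(i-l-1)^(expo n l), whose exponents
   1,2,...,2,1 form a tent, and seg_prod z i n = prod_{l<n} z(i-l-1). *)

Definition tent_prod (z : Z -> R) (n i : Z) : R :=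
  if (n <=? 0)%Z then 1 else
  prod_upto (fun l : nat => z (i - Z.of_nat l - 1)%Z ^ expo n (Z.of_nat l)) (Z.to_nat n).

Definition seg_prod (z : Z -> R) (i n : Z) : R :=
  prod_upto (fun l : nat => z (i - Z.of_nat l - 1)%Z) (Z.to_nat n).

Lemma uu_tent (t : Z -> Z -> R) (n i : Z) : uu t n i = tent_prod (xx t) n i.
Proof. reflexivity. Qed.

Lemma vv_tent (t : Z -> Z -> R) (n i : Z) : vv t n i = tent_prod (yy t) n i.
Proof. reflexivity. Qed.

Lemma tent_prod_nonpos (z : Z -> R) (n i : Z) : (n <= 0)%Z -> tent_prod z n i = 1.
Proof. intros Hn; unfold tent_prod; rewrite (proj2 (Z.leb_le n 0) Hn); reflexivity. Qed.

Lemma tent_prod_pos (z : Z -> R) (n i : Z) : (forall r, 0 < z r) -> 0 < tent_prod z n i.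
Proof.
  intros Hz; unfold tent_prod; destruct (n <=? 0)%Z; [lra|].
  apply prod_upto_pos; intros; apply pow_lt, Hz.
Qed.

Lemma seg_prod_succ (z : Z -> R) (i n : Z) :
  (0 <= n)%Z -> seg_prod z i (n + 1) = seg_prod z i n * z (i - n - 1)%Z.
Proof.
  intros Hn; unfold seg_prod.
  rewrite Z2Nat.inj_add, Nat.add_1_r by lia; simpl.
  rewrite Z2Nat.id by lia; reflexivity.
Qed.

Lemma expo_first (n : Z) : (1 <= n)%Z -> expo n 0 = 1%nat.
Proof.
  intros Hn; unfold expo.
  replace (n + 1 - Z.abs (n - 1 - 2 * 0))%Z with 2%Z by lia; reflexivity.
Qed.

Lemma expo_last (n : Z) : (0 <= n)%Z -> expo n n = 0%nat.
Proof.
  intros Hn; unfold expo.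
  replace (n + 1 - Z.abs (n - 1 - 2 * n))%Z with 0%Z by lia; reflexivity.
Qed.

Lemma expo_shift (n l : Z) : (0 <= l <= n)%Z -> expo (n + 2) (l + 1) = S (expo n l).
Proof.
  intros Hl; unfold expo.
  replace (n + 2 + 1 - Z.abs (n + 2 - 1 - 2 * (l + 1)))%Z
    with ((n + 1 - Z.abs (n - 1 - 2 * l)) + 1 * 2)%Z by lia.
  rewrite Z.div_add, Z2Nat.inj_add by (try apply Z.div_pos; lia).
  simpl; lia.
Qed.

Lemma tent_prod_rec (z : Z -> R) (n i : Z) : (-2 <= n)%Z ->
  tent_prod z (n + 2) i = tent_prod z n (i - 1) * seg_prod z i (n + 2).
Proof.
  intros Hn.
  destruct (Z.eq_dec n (-2)) as [->|Hn2].
  { rewrite !tent_prod_nonpos by lia; unfold seg_prod; simpl; ring. }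
  destruct (Z.eq_dec n (-1)) as [->|Hn1].
  { rewrite (tent_prod_nonpos _ (-1)) by lia; unfold tent_prod, seg_prod; simpl; ring. }
  assert (Hlen : Z.to_nat (n + 2) = S (S (Z.to_nat n))) by lia.
  unfold tent_prod at 1, seg_prod.
  rewrite (proj2 (Z.leb_gt (n + 2) 0)) by lia.
  rewrite Hlen, 2!(prod_upto_first _ (S (Z.to_nat n))), expo_first, pow_1 by lia.
  erewrite prod_upto_ext.
  2:{ intros l Hl. rewrite Nat2Z.inj_succ, <- Z.add_1_r, expo_shift by lia.
      replace (i - (Z.of_nat l + 1) - 1)%Z with (i - 1 - Z.of_nat l - 1)%Z by lia.
      reflexivity. }
  simpl pow.
  rewrite (prod_upto_mul (fun l => z (i - 1 - Z.of_nat l - 1)%Z)).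
  change (prod_upto ?f (S ?N)) with (prod_upto f N * f N) at 2.
  cbv beta; rewrite Z2Nat.id, expo_last, pow_O by lia.
  rewrite (prod_upto_ext (fun l => z (i - Z.of_nat (S l) - 1)%Z)
                         (fun l => z (i - 1 - Z.of_nat l - 1)%Z))
    by (intros; f_equal; lia).
  unfold tent_prod; destruct (n <=? 0)%Z eqn:En.
  - assert (n = 0)%Z by (apply Z.leb_le in En; lia); subst n; simpl.
    replace (i - 0 - 1)%Z with (i - 1)%Z by lia; ring.
  - replace (i - Z.of_nat 0 - 1)%Z with (i - 1)%Z by lia; ring.
Qed.

Lemma seg_prod_exchange (z : Z -> R) (p n : Z) : (0 <= n)%Z ->
  seg_prod z p (n + 1) * seg_prod z (p - 1) (n + 1)
  = seg_prod z p (n + 2) * seg_prod z (p - 1) n.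
Proof.
  intros Hn.
  replace (n + 2)%Z with (n + 1 + 1)%Z by lia.
  rewrite (seg_prod_succ z p (n + 1)), (seg_prod_succ z (p - 1) n) by lia.
  replace (p - 1 - n - 1)%Z with (p - (n + 1) - 1)%Z by lia; ring.
Qed.

Lemma tent_wave_odd (z : Z -> R) (q : Z) : (0 <= q)%Z -> forall p,
  tent_prod z (2 * q - 1) p * tent_prod z (2 * q - 1) (p - 1)
  = tent_prod z (2 * q) p * tent_prod z (2 * q - 2) (p - 1).
Proof.
  intros Hq; pattern q; revert q Hq; apply natlike_ind.
  - intros p; rewrite !tent_prod_nonpos by lia; ring.
  - intros q Hq IH p.
    replace (2 * Z.succ q - 1)%Z with (2 * q - 1 + 2)%Z by lia.
    replace (2 * Z.succ q - 2)%Z with (2 * q - 2 + 2)%Z by lia.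
    replace (2 * Z.succ q)%Z with (2 * q + 2)%Z by lia.
    rewrite !tent_prod_rec by lia.
    replace (2 * q - 1 + 2)%Z with (2 * q + 1)%Z by lia.
    replace (2 * q - 2 + 2)%Z with (2 * q)%Z by lia.
    transitivity (tent_prod z (2 * q - 1) (p - 1) * tent_prod z (2 * q - 1) (p - 1 - 1)
                  * (seg_prod z p (2 * q + 1) * seg_prod z (p - 1) (2 * q + 1))); [ring|].
    rewrite IH, seg_prod_exchange by lia; ring.
Qed.

Lemma tent_wave_even (z : Z -> R) (q : Z) : (0 <= q)%Z -> forall p,
  tent_prod z (2 * q) p * tent_prod z (2 * q) (p - 1) * z (p - 1 - q)%Z
  = tent_prod z (2 * q + 1) p * tent_prod z (2 * q - 1) (p - 1).
Proof.
  intros Hq; pattern q; revert q Hq; apply natlike_ind.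
  - intros p; rewrite (tent_prod_nonpos _ (2 * 0)), (tent_prod_nonpos _ (2 * 0)),
      (tent_prod_nonpos _ (2 * 0 - 1)) by lia.
    unfold tent_prod; simpl.
    replace (p - 0 - 1)%Z with (p - 1 - 0)%Z by lia; ring.
  - intros q Hq IH p.
    replace (2 * Z.succ q - 1)%Z with (2 * q - 1 + 2)%Z by lia.
    replace (2 * Z.succ q + 1)%Z with (2 * q + 1 + 2)%Z by lia.
    replace (2 * Z.succ q)%Z with (2 * q + 2)%Z by lia.
    rewrite !tent_prod_rec by lia.
    replace (2 * q - 1 + 2)%Z with (2 * q + 1)%Z by lia.
    replace (2 * q + 2)%Z with (2 * q + 1 + 1)%Z by lia.
    replace (p - 1 - Z.succ q)%Z with (p - 1 - 1 - q)%Z by lia.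
    transitivity (tent_prod z (2 * q) (p - 1) * tent_prod z (2 * q) (p - 1 - 1)
                  * z (p - 1 - 1 - q)%Z
                  * (seg_prod z p (2 * q + 1 + 1) * seg_prod z (p - 1) (2 * q + 1 + 1))); [ring|].
    rewrite IH, seg_prod_exchange by lia; ring.
Qed.

Lemma T_system_unique (t : Z -> Z -> R) (T F : Z -> Z -> Z -> R) :
  is_T_solution t T -> is_T_solution t F -> (forall i j k, F i j k <> 0) ->
  forall i j k, (0 <= k)%Z -> Z.odd (i + j + k) = true -> T i j k = F i j k.
Proof.
  intros [T_init T_rec] [F_init F_rec] F_nz.
  set (agree k := forall i j, Z.odd (i + j + k) = true -> T i j k = F i j k).
  assert (Hinit : forall k, (k = 0 \/ k = 1)%Z -> agree k).
  { intros k Hk i j Hodd; apply odd_mod2 in Hodd.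
    replace k with ((i + j + 1) mod 2)%Z by zlia.
    rewrite T_init, F_init; reflexivity. }
  assert (Hstep : forall k, (0 <= k)%Z -> agree k /\ agree (k + 1)%Z).
  { intros k Hk; pattern k; revert k Hk; apply natlike_ind.
    - split; apply Hinit; lia.
    - intros k Hk [Hk0 Hk1]; split; [exact Hk1|].
      intros i j Hodd; apply odd_mod2 in Hodd.
      assert (Hev : Z.even (i + j + (k + 1)) = true) by (apply even_mod2; zlia).
      assert (Hnb : forall a b, ((a + b + (k + 1)) mod 2 = 1)%Z ->
                                T a b (k + 1)%Z = F a b (k + 1)%Z)
        by (intros a b Hab; apply Hk1, odd_mod2, Hab).
      pose proof (T_rec i j (k + 1)%Z ltac:(lia) Hev) as HT.
      pose proof (F_rec i j (k + 1)%Z ltac:(lia) Hev) as HF.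
      replace (k + 1 - 1)%Z with k in HT, HF by lia.
      rewrite Hk0 in HT by (apply odd_mod2; zlia).
      rewrite !Hnb in HT by zlia.
      replace (Z.succ k + 1)%Z with (k + 1 + 1)%Z by lia.
      apply (Rmult_eq_reg_r (F i j k)); [congruence | apply F_nz]. }
  intros i j k Hk Hodd; exact (proj1 (Hstep k Hk) i j Hodd).
Qed.

Section Corners.
Variable t : Z -> Z -> R.
Hypothesis t_pos : forall i j : Z, 0 < t i j.
Hypothesis t_diag_period : forall i j : Z, t (i + 2)%Z (j + 2)%Z = t i j.

Lemma t_diag_shift (c a b : Z) : t (a + 2 * c)%Z (b + 2 * c)%Z = t a b.
Proof.
  induction c as [|c IH|c IH] using Z.peano_ind.
  - rewrite !Z.add_0_r; reflexivity.
  - rewrite <- IH, <- (t_diag_period (a + 2 * c)); f_equal; lia.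
  - rewrite <- IH, <- (t_diag_period (a + 2 * Z.pred c)); f_equal; lia.
Qed.

Lemma t_diag_eq (a b c d : Z) :
  (a - c = b - d)%Z -> ((a - c) mod 2 = 0)%Z -> t a b = t c d.
Proof.
  intros Hab Hev; rewrite <- (t_diag_shift ((a - c) / 2) c d); f_equal; zlia.
Qed.

Definition hprod (p r : Z) : R := t (p + 1)%Z r * t (p - 1)%Z r.
Definition vprod (p r : Z) : R := t p (r + 1)%Z * t p (r - 1)%Z.

Ltac corner := unfold hprod, vprod, aa, bb, cc, dd;
  repeat split;
  first [ f_equal; apply t_diag_eq; zlia
        | rewrite Rmult_comm; f_equal; apply t_diag_eq; zlia ].

Lemma corners_even_0 (p r al : Z) : ((p + r) mod 4 = 0)%Z -> (p - r = 2 * al)%Z ->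
  hprod p r = aa t al * bb t (al - 1) /\ vprod p r = aa t (al - 1) * bb t al /\
  t p r * t (p - 1)%Z (r - 1)%Z = cc t al * dd t al.
Proof. intros; corner. Qed.

Lemma corners_even_2 (p r al : Z) : ((p + r) mod 4 = 2)%Z -> (p - r = 2 * al)%Z ->
  hprod p r = aa t (al - 1) * bb t al /\ vprod p r = aa t al * bb t (al - 1) /\
  t p r * t (p - 1)%Z (r - 1)%Z = cc t al * dd t al.
Proof. intros; corner. Qed.

Lemma corners_odd_3 (p r be : Z) : ((p + r) mod 4 = 3)%Z -> (p - r = 2 * be + 1)%Z ->
  hprod p r = cc t (be + 1) * dd t be /\ vprod p r = cc t be * dd t (be + 1) /\
  t (p + 1)%Z (r + 1)%Z * t p r = aa t be * bb t be.
Proof. intros; corner. Qed.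

Lemma corners_odd_1 (p r be : Z) : ((p + r) mod 4 = 1)%Z -> (p - r = 2 * be + 1)%Z ->
  hprod p r = cc t be * dd t (be + 1) /\ vprod p r = cc t (be + 1) * dd t be /\
  t (p + 1)%Z (r + 1)%Z * t p r = aa t be * bb t be.
Proof. intros; corner. Qed.

(* Local identities: y_al (resp. x_be) is exactly the defect of t in the
   T-system relation at an even (resp. odd) level. *)

Lemma yy_local (p r al : Z) : ((p + r) mod 2 = 0)%Z -> (p - r = 2 * al)%Z ->
  yy t al * (t p r * t (p - 1)%Z (r - 1)%Z) = hprod p r + vprod p r.
Proof.
  intros Hpar Hal.
  assert (Hmod : ((p + r) mod 4 = 0)%Z \/ ((p + r) mod 4 = 2)%Z) by zlia.
  destruct Hmod as [Hmod | Hmod];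
    [ destruct (corners_even_0 p r al Hmod Hal) as (-> & -> & ->)
    | destruct (corners_even_2 p r al Hmod Hal) as (-> & -> & ->) ];
    unfold yy; field; split; apply Rgt_not_eq, t_pos.
Qed.

Lemma xx_local (p r be : Z) : ((p + r) mod 2 = 1)%Z -> (p - r = 2 * be + 1)%Z ->
  xx t be * (t (p + 1)%Z (r + 1)%Z * t p r) = hprod p r + vprod p r.
Proof.
  intros Hpar Hbe.
  assert (Hmod : ((p + r) mod 4 = 3)%Z \/ ((p + r) mod 4 = 1)%Z) by zlia.
  destruct Hmod as [Hmod | Hmod];
    [ destruct (corners_odd_3 p r be Hmod Hbe) as (-> & -> & ->)
    | destruct (corners_odd_1 p r be Hmod Hbe) as (-> & -> & ->) ];
    unfold xx; field; split; apply Rgt_not_eq, t_pos.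
Qed.

Lemma hprod_vprod_pos (p r : Z) : 0 < hprod p r + vprod p r.
Proof. unfold hprod, vprod; apply Rplus_lt_0_compat; apply Rmult_lt_0_compat; apply t_pos. Qed.
End Corners.

Section Solution.
Variable t : Z -> Z -> R.
Hypothesis t_pos : forall i j : Z, 0 < t i j.
Hypothesis t_diag_period : forall i j : Z, t (i + 2)%Z (j + 2)%Z = t i j.

Definition prefactor (k e : Z) : R := uu t (k - 1) e * vv t (k - 2) e.

Definition sol (i j k : Z) : R := prefactor k ((i - j + k - 1) / 2) * theta t i j k.

Lemma prefactor_wave_even (h E : Z) : (1 <= h)%Z ->
  prefactor (2 * h) E * prefactor (2 * h) (E - 1) * yy t (E - h)
  = prefactor (2 * h + 1) E * prefactor (2 * h - 1) (E - 1).
Proof.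
  intros Hh; unfold prefactor; rewrite !uu_tent, !vv_tent.
  pose proof (tent_wave_odd (xx t) h ltac:(lia) E) as Hx.
  pose proof (tent_wave_even (yy t) (h - 1) ltac:(lia) E) as Hy.
  replace (2 * (h - 1))%Z with (2 * h - 2)%Z in Hy by lia.
  replace (2 * h - 2 + 1)%Z with (2 * h - 1)%Z in Hy by lia.
  replace (E - 1 - (h - 1))%Z with (E - h)%Z in Hy by lia.
  replace (2 * h + 1 - 1)%Z with (2 * h)%Z by lia.
  replace (2 * h + 1 - 2)%Z with (2 * h - 1)%Z by lia.
  replace (2 * h - 1 - 1)%Z with (2 * h - 2)%Z by lia.
  replace (2 * h - 1 - 2)%Z with (2 * h - 2 - 1)%Z by lia.
  transitivity (tent_prod (xx t) (2 * h - 1) E * tent_prod (xx t) (2 * h - 1) (E - 1)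
    * (tent_prod (yy t) (2 * h - 2) E * tent_prod (yy t) (2 * h - 2) (E - 1) * yy t (E - h)));
    [ring | rewrite Hx, Hy; ring].
Qed.

Lemma prefactor_wave_odd (h E : Z) : (0 <= h)%Z ->
  prefactor (2 * h + 1) E * prefactor (2 * h + 1) (E - 1) * xx t (E - 1 - h)
  = prefactor (2 * h + 2) E * prefactor (2 * h) (E - 1).
Proof.
  intros Hh; unfold prefactor; rewrite !uu_tent, !vv_tent.
  pose proof (tent_wave_even (xx t) h Hh E) as Hx.
  pose proof (tent_wave_odd (yy t) h Hh E) as Hy.
  replace (2 * h + 1 - 1)%Z with (2 * h)%Z by lia.
  replace (2 * h + 1 - 2)%Z with (2 * h - 1)%Z by lia.
  replace (2 * h + 2 - 1)%Z with (2 * h + 1)%Z by lia.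
  replace (2 * h + 2 - 2)%Z with (2 * h)%Z by lia.
  transitivity (tent_prod (xx t) (2 * h) E * tent_prod (xx t) (2 * h) (E - 1) * xx t (E - 1 - h)
    * (tent_prod (yy t) (2 * h - 1) E * tent_prod (yy t) (2 * h - 1) (E - 1)));
    [ring | rewrite Hx, Hy; ring].
Qed.

Lemma sol_horizontal (i j k : Z) :
  sol (i + 1) j k * sol (i - 1) j k
  = prefactor k ((i - j + k) / 2) * prefactor k ((i - j + k) / 2 - 1)
    * hprod t (i + k / 2) (j + k / 2).
Proof.
  unfold sol, theta, hprod.
  replace ((i + 1 - j + k - 1) / 2)%Z with ((i - j + k) / 2)%Z by (f_equal; lia).
  replace ((i - 1 - j + k - 1) / 2)%Z with ((i - j + k) / 2 - 1)%Z by zlia.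
  replace (i + 1 + k / 2)%Z with (i + k / 2 + 1)%Z by lia.
  replace (i - 1 + k / 2)%Z with (i + k / 2 - 1)%Z by lia.
  ring.
Qed.

Lemma sol_vertical (i j k : Z) :
  sol i (j + 1) k * sol i (j - 1) k
  = prefactor k ((i - j + k) / 2) * prefactor k ((i - j + k) / 2 - 1)
    * vprod t (i + k / 2) (j + k / 2).
Proof.
  unfold sol, theta, vprod.
  replace ((i - (j - 1) + k - 1) / 2)%Z with ((i - j + k) / 2)%Z by (f_equal; lia).
  replace ((i - (j + 1) + k - 1) / 2)%Z with ((i - j + k) / 2 - 1)%Z by zlia.
  replace (j + 1 + k / 2)%Z with (j + k / 2 + 1)%Z by lia.
  replace (j - 1 + k / 2)%Z with (j + k / 2 - 1)%Z by lia.
  ring.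
Qed.

Lemma sol_levels (i j k : Z) : (1 <= k)%Z -> ((i + j + k) mod 2 = 0)%Z ->
  sol i j (k + 1) * sol i j (k - 1)
  = prefactor k ((i - j + k) / 2) * prefactor k ((i - j + k) / 2 - 1)
    * (hprod t (i + k / 2) (j + k / 2) + vprod t (i + k / 2) (j + k / 2)).
Proof.
  intros Hk Hpar; unfold sol, theta.
  replace ((i - j + (k + 1) - 1) / 2)%Z with ((i - j + k) / 2)%Z by (f_equal; lia).
  replace ((i - j + (k - 1) - 1) / 2)%Z with ((i - j + k) / 2 - 1)%Z by zlia.
  set (E := ((i - j + k) / 2)%Z).
  destruct (Z.Even_or_Odd k) as [[h ->] | [h ->]].
  - replace ((2 * h + 1) / 2)%Z with h by zlia.
    replace ((2 * h - 1) / 2)%Z with (h - 1)%Z by zlia.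
    replace ((2 * h) / 2)%Z with h by zlia.
    rewrite <- (yy_local t t_pos t_diag_period (i + h) (j + h) (E - h)) by (unfold E; zlia).
    replace (i + (h - 1))%Z with (i + h - 1)%Z by lia.
    replace (j + (h - 1))%Z with (j + h - 1)%Z by lia.
    transitivity (prefactor (2 * h + 1) E * prefactor (2 * h - 1) (E - 1)
                  * (t (i + h) (j + h) * t (i + h - 1) (j + h - 1))); [ring|].
    rewrite <- prefactor_wave_even by lia; ring.
  - replace ((2 * h + 1 + 1) / 2)%Z with (h + 1)%Z by zlia.
    replace ((2 * h + 1 - 1) / 2)%Z with h by zlia.
    replace ((2 * h + 1) / 2)%Z with h by zlia.
    rewrite <- (xx_local t t_pos t_diag_period (i + h) (j + h) (E - 1 - h)) by (unfold E; zlia).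
    replace (2 * h + 1 + 1)%Z with (2 * h + 2)%Z by lia.
    replace (2 * h + 1 - 1)%Z with (2 * h)%Z by lia.
    replace (i + (h + 1))%Z with (i + h + 1)%Z by lia.
    replace (j + (h + 1))%Z with (j + h + 1)%Z by lia.
    transitivity (prefactor (2 * h + 2) E * prefactor (2 * h) (E - 1)
                  * (t (i + h + 1) (j + h + 1) * t (i + h) (j + h))); [ring|].
    rewrite <- prefactor_wave_odd by lia; ring.
Qed.

Lemma prefactor_pos (k e : Z) : 0 < prefactor k e.
Proof.
  unfold prefactor; rewrite uu_tent, vv_tent.
  apply Rmult_lt_0_compat; apply tent_prod_pos; intros;
    unfold xx, yy, aa, bb, cc, dd;
    repeat (apply Rmult_lt_0_compat || apply Rplus_lt_0_compat || apply Rinv_0_lt_compat);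
    apply t_pos.
Qed.

Lemma sol_pos (i j k : Z) : 0 < sol i j k.
Proof. apply Rmult_lt_0_compat; [apply prefactor_pos | apply t_pos]. Qed.

Lemma sol_is_T_solution : is_T_solution t sol.
Proof.
  split.
  - intros i j.
    assert (Hk : ((i + j + 1) mod 2 = 0)%Z \/ ((i + j + 1) mod 2 = 1)%Z) by zlia.
    destruct Hk as [-> | ->]; unfold sol, prefactor, theta, uu, vv; simpl;
      rewrite !Z.add_0_r; ring.
  - intros i j k Hk Hev; apply even_mod2 in Hev.
    rewrite sol_levels, sol_horizontal, sol_vertical by assumption; ring.
Qed.

Lemma sol_Lratio (i j k : Z) : (1 <= k)%Z -> ((i + j + k) mod 2 = 0)%Z ->
  Lratio sol i j k = hprod t (i + k / 2) (j + k / 2)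
    / (hprod t (i + k / 2) (j + k / 2) + vprod t (i + k / 2) (j + k / 2)).
Proof.
  intros Hk Hpar; unfold Lratio.
  rewrite sol_horizontal, sol_levels by assumption.
  pose proof (hprod_vprod_pos t t_pos (i + k / 2) (j + k / 2)).
  field; repeat split; apply Rgt_not_eq; try apply prefactor_pos; assumption.
Qed.

Lemma sol_Rratio (i j k : Z) : (1 <= k)%Z -> ((i + j + k) mod 2 = 0)%Z ->
  Rratio sol i j k = vprod t (i + k / 2) (j + k / 2)
    / (hprod t (i + k / 2) (j + k / 2) + vprod t (i + k / 2) (j + k / 2)).
Proof.
  intros Hk Hpar; unfold Rratio.
  rewrite sol_vertical, sol_levels by assumption.
  pose proof (hprod_vprod_pos t t_pos (i + k / 2) (j + k / 2)).
  field; repeat split; apply Rgt_not_eq; try apply prefactor_pos; assumption.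
Qed.

(* The ratio formulas of the theorem, for sol: read off hprod and vprod from
   the corner values, with p + r = i + j + k (k even) or i + j + k - 1 (k odd). *)
Lemma sol_ratio_formulas (i j k : Z) : (1 <= k)%Z -> Z.even (i + j + k) = true ->
     (Z.even k = true ->
        let al := ((i - j) / 2)%Z in
        (((i + j + k) mod 4 = 0)%Z ->
           Lratio sol i j k = aa t al * bb t (al - 1)%Z /
             (aa t al * bb t (al - 1)%Z + aa t (al - 1)%Z * bb t al)) /\
        (((i + j + k) mod 4 = 2)%Z ->
           Lratio sol i j k = aa t (al - 1)%Z * bb t al /
             (aa t al * bb t (al - 1)%Z + aa t (al - 1)%Z * bb t al))) /\
     (Z.odd k = true ->
        let be := ((i - j - 1) / 2)%Z in
        (((i + j + k) mod 4 = 0)%Z ->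
           Lratio sol i j k = cc t (be + 1)%Z * dd t be /
             (cc t be * dd t (be + 1)%Z + cc t (be + 1)%Z * dd t be)) /\
        (((i + j + k) mod 4 = 2)%Z ->
           Lratio sol i j k = cc t be * dd t (be + 1)%Z /
             (cc t be * dd t (be + 1)%Z + cc t (be + 1)%Z * dd t be))) /\
     Rratio sol i j k = 1 - Lratio sol i j k.
Proof.
  intros Hk Hev; apply even_mod2 in Hev.
  rewrite sol_Rratio, sol_Lratio by assumption.
  pose proof (hprod_vprod_pos t t_pos (i + k / 2) (j + k / 2)) as Hsum.
  split; [|split].
  - intros Hke al; apply even_mod2 in Hke; unfold al.
    split; intros Hmod.
    + destruct (corners_even_0 t t_diag_period (i + k / 2) (j + k / 2) ((i - j) / 2))
        as (-> & -> & _); [zlia | zlia | reflexivity].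
    + destruct (corners_even_2 t t_diag_period (i + k / 2) (j + k / 2) ((i - j) / 2))
        as (-> & -> & _); [zlia | zlia | rewrite Rplus_comm; reflexivity].
  - intros Hko be; apply odd_mod2 in Hko; unfold be.
    split; intros Hmod.
    + destruct (corners_odd_3 t t_diag_period (i + k / 2) (j + k / 2) ((i - j - 1) / 2))
        as (-> & -> & _); [zlia | zlia | rewrite Rplus_comm; reflexivity].
    + destruct (corners_odd_1 t t_diag_period (i + k / 2) (j + k / 2) ((i - j - 1) / 2))
        as (-> & -> & _); [zlia | zlia | reflexivity].
  - field; apply Rgt_not_eq, Hsum.
Qed.
End Solution.

(* The ratios only involve values at valid points, so they agree for two
   functions agreeing there. *)
Lemma ratios_of_agreeing (T F : Z -> Z -> Z -> R) (i j k : Z) :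
  (forall i j k, (0 <= k)%Z -> Z.odd (i + j + k) = true -> T i j k = F i j k) ->
  (1 <= k)%Z -> Z.even (i + j + k) = true ->
  Lratio T i j k = Lratio F i j k /\ Rratio T i j k = Rratio F i j k.
Proof.
  intros Hagree Hk Hev; apply even_mod2 in Hev.
  unfold Lratio, Rratio; rewrite !Hagree by (try apply odd_mod2; zlia).
  split; reflexivity.
Qed.

Theorem mainTheorem6 (m : Z) (t : Z -> Z -> R) (T : Z -> Z -> Z -> R) :
  (1 <= m)%Z ->
  (forall i j : Z, 0 < t i j) ->
  (forall i j : Z, t (i + m)%Z (j - m)%Z = t i j) ->
  (forall i j : Z, t (i + 2)%Z (j + 2)%Z = t i j) ->
  is_T_solution t T ->
  (forall i j k : Z, (0 <= k)%Z -> Z.odd (i + j + k) = true ->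
     T i j k = uu t (k - 1)%Z ((i - j + k - 1) / 2)%Z
               * vv t (k - 2)%Z ((i - j + k - 1) / 2)%Z
               * theta t i j k)
  /\
  (forall i j k : Z, (1 <= k)%Z -> Z.even (i + j + k) = true ->
     (Z.even k = true ->
        let al := ((i - j) / 2)%Z in
        (((i + j + k) mod 4 = 0)%Z ->
           Lratio T i j k = aa t al * bb t (al - 1)%Z /
             (aa t al * bb t (al - 1)%Z + aa t (al - 1)%Z * bb t al)) /\
        (((i + j + k) mod 4 = 2)%Z ->
           Lratio T i j k = aa t (al - 1)%Z * bb t al /
             (aa t al * bb t (al - 1)%Z + aa t (al - 1)%Z * bb t al))) /\
     (Z.odd k = true ->
        let be := ((i - j - 1) / 2)%Z in
        (((i + j + k) mod 4 = 0)%Z ->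
           Lratio T i j k = cc t (be + 1)%Z * dd t be /
             (cc t be * dd t (be + 1)%Z + cc t (be + 1)%Z * dd t be)) /\
        (((i + j + k) mod 4 = 2)%Z ->
           Lratio T i j k = cc t be * dd t (be + 1)%Z /
             (cc t be * dd t (be + 1)%Z + cc t (be + 1)%Z * dd t be))) /\
     Rratio T i j k = 1 - Lratio T i j k).
Proof.
  intros _ t_pos _ t_diag_period HT.
  assert (T_eq : forall i j k, (0 <= k)%Z -> Z.odd (i + j + k) = true -> T i j k = sol t i j k)
    by exact (T_system_unique t T (sol t) HT (sol_is_T_solution t t_pos t_diag_period)
                (fun i j k => Rgt_not_eq _ _ (sol_pos t t_pos i j k))).
  split; [exact T_eq|].
  intros i j k Hk Hev.
  destruct (ratios_of_agreeing T (sol t) i j k T_eq Hk Hev) as [-> ->].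
  exact (sol_ratio_formulas t t_pos t_diag_period i j k Hk Hev).
Qed.
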